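(* Let $G=(V,A)$ be a finite directed graph with root $r\in V$ such that every vertex has a directed path to $r$ in $G$. Run the following cluster-popping algorithm. Include each arc of $A$ independently with probability $1/2$, giving a subgraph $(V,S)$. While $(V,S)$ has a cluster, choose (by any rule) a minimal cluster $C$ of $(V,S)$ and re-randomise, independently with probability $1/2$ each, the membership in $S$ of every arc $e\in A$ whose tail lies in $C$. Then the algorithm terminates with probability $1$. On termination, $(V,S)$ is a uniformly random root-connected spanning subgraph of $G$.
   Context: For an arc $e$, $e^-$ denotes its tail and $e^+$ its head. A spanning subgraph $(V,S)$, $S\subseteq A$, is root-connected if every $v\in V$ has a directed path to $r$ in $(V,S)$. A cluster of $(V,S)$ is a nonempty set $C\subseteq V\setminus\{r\}$ such that no arc $e\in S$ has $e^-\in C$ and $e^+\in V\setminus C$. A cluster is minimal if it contains no other cluster as a proper subset. $(V,S)$ is root-connected iff it has no cluster. *)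

From HB Require Import structures.
From mathcomp Require Import all_boot all_order all_algebra.
From mathcomp Require Import all_classical all_reals all_analysis.
Set Implicit Arguments. Unset Strict Implicit. Unset Printing Implicit Defensive.
Import Order.TTheory GRing.Theory Num.Theory.
Local Open Scope ring_scope.

(* A finite directed (multi)graph: vertex type V, arc type E, with
   tail e = e^- and head e = e^+. *)
Section ClusterPopping.
Variables (V E : finType) (tail head : E -> V) (r : V).

Definition arc_rel (S : {set E}) : rel V :=
  fun u v => [exists e in S, (tail e == u) && (head e == v)].

Definition root_connected (S : {set E}) : bool :=
  [forall v, connect (arc_rel S) v r].

Definition is_cluster (S : {set E}) (C : {set V}) : bool :=
  [&& C != finset.set0, r \notin C &
      [forall e in S, (tail e \in C) ==> (head e \in C)]].

Definition has_cluster (S : {set E}) : bool := [exists C, is_cluster S C].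

Definition minimal_cluster (S : {set E}) (C : {set V}) : bool :=
  is_cluster S C && [forall C' : {set V}, (C' \proper C) ==> ~~ is_cluster S C'].

Definition out_arcs (C : {set V}) : {set E} := [set e | tail e \in C].

(* A choice rule sees the whole history of states (nonempty list, last
   element = current state) and picks a set of vertices. *)
Definition valid_rule (rule : seq {set E} -> {set V}) : Prop :=
  forall hist : seq {set E}, hist != [::] ->
    has_cluster (last finset.set0 hist) -> minimal_cluster (last finset.set0 hist) (rule hist).

Variable R : realType.
Variable rule : seq {set E} -> {set V}.

(* one-step transition probability from history [hist] (current state
   S := last hist) to the new state S'.  If S has no cluster the algorithm
   has stopped: the state is frozen. *)
Definition trans (hist : seq {set E}) (S' : {set E}) : R :=
  let S := last finset.set0 hist in
  if has_cluster S then
    let C := rule hist in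
    if [forall e, (tail e \notin C) ==> ((e \in S') == (e \in S))]
    then (2^-1) ^+ #|out_arcs C| else 0
  else (S' == S)%:R.

(* probability of the history t = (S_0, ..., S_n) *)
Definition hist_weight n (t : n.+1.-tuple {set E}) : R :=
  (2^-1) ^+ #|E| * \prod_(i < n) trans (take i.+1 t) (nth finset.set0 t i.+1).

Definition state_prob (n : nat) (S : {set E}) : R :=
  \sum_(t : n.+1.-tuple {set E} | last finset.set0 t == S) hist_weight t.

End ClusterPopping.

From HB Require Import structures.
From mathcomp Require Import all_boot all_order all_algebra.
From mathcomp Require Import all_classical all_reals all_analysis.
From mathcomp Require Import lra.
Import Order.TTheory GRing.Theory Num.Theory.
Import numFieldNormedType.Exports.
Set Implicit Arguments. Unset Strict Implicit. Unset Printing Implicit Defensive.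
Local Open Scope ring_scope.

(* For f : {set E} -> R, [pop_expect f m S] is the
   expected value of f after m steps of the process started at S in which
   every step pops a canonical minimal cluster of the current state.
   1. Combinatorics: being a (minimal) cluster C only depends on the arcs with
      tail in C, distinct minimal clusters are disjoint, and a state has no
      cluster iff it is root-connected.
   2. [resample C phi S] averages phi over the states agreeing with S off the
      arcs leaving C.  Resamplings of disjoint sets commute, so for f vanishing
      on clustered states a step may pop any minimal cluster
      (pop_expect_step): the stopped process does not depend on the rule.
   3. Uniformity: if T and T' = T with one arc e flipped are root-connected,
      popping from S and from S with e flipped sends the same total weight to
      {T, T'} in both orders (flip_exchange); hence the mass sent to T from
      all starting states is the same for every root-connected T.
   4. Termination: within |E|+1 steps every state becomes root-connected with
      probability at least some d > 0, so the clustered mass decays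
      geometrically.
   5. [state_prob] is a sum over histories of the algorithm run with an
      arbitrary valid rule; by 2 it unfolds into pop_expect
      (history_expect_pop), and 3-4 then give both limits. *)

Lemma sum_tupleS (M : nmodType) (T : finType) m (F : m.+1.-tuple T -> M) :
  \sum_t F t = \sum_x \sum_(t : m.-tuple T) F (cons_tuple x t).
Proof.
rewrite pair_big /=.
rewrite (reindex (fun p : T * m.-tuple T => cons_tuple p.1 p.2)) //=.
apply: onW_bij; exists (fun t => (thead t, behead_tuple t)).
  by case=> x t /=; congr (_, _); apply: val_inj.
by move=> t; apply: val_inj; case: t => [[|x s] Hs].
Qed.

Lemma sum_tuple0 (M : nmodType) (T : finType) (F : 0.-tuple T -> M) :
  \sum_t F t = F [tuple].
Proof. by rewrite (big_pred1 [tuple]) // => t /=; apply/esym/eqP; exact: tuple0. Qed.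

Section ClusterPopping.
Variables (V E : finType) (tail head : E -> V) (r : V).
Implicit Types (C D : {set V}) (S T U X Y : {set E}).

Local Notation is_cl := (is_cluster tail head r).
Local Notation min_cl := (minimal_cluster tail head r).
Local Notation has_cl := (has_cluster tail head r).

Lemma is_cluster_local D S S' :
  (forall e, tail e \in D -> (e \in S) = (e \in S')) -> is_cl S D = is_cl S' D.
Proof.
move=> eqSS'; rewrite /is_cluster; congr [&& _, _ & _].
apply: eq_forallb => e; case: (boolP (tail e \in D)) => eD; first by rewrite eqSS'.
by case: (e \in S); case: (e \in S').
Qed.

(* Hence so is being a minimal cluster, whose proper subsets lie in C. *)
Lemma minimal_cluster_local D S S' :
  (forall e, tail e \in D -> (e \in S) = (e \in S')) -> min_cl S D = min_cl S' D.
Proof.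
move=> eqSS'; rewrite /minimal_cluster (is_cluster_local eqSS'); congr (_ && _).
apply: eq_forallb => C; case: (boolP (C \proper D)) => //= CD.
rewrite (@is_cluster_local C S S') // => e eC; apply: eqSS'.
by move/proper_sub/fintype.subsetP: CD; apply.
Qed.

Lemma minimal_is_cluster S C : min_cl S C -> is_cl S C.
Proof. by case/andP. Qed.

Lemma minimal_has_cluster S C : min_cl S C -> has_cl S.
Proof. by move/minimal_is_cluster=> clC; apply/existsP; exists C. Qed.

Lemma minimal_clusterP S C D : min_cl S C -> is_cl S D -> D \subset C -> D = C.
Proof.
case/andP=> _ /forallP minC clD DC; apply/eqP; apply: contraT => DnC.
by move: (minC D); rewrite finset.properEneq DnC DC clD.
Qed.

Lemma is_clusterI S C D v :
  is_cl S C -> is_cl S D -> v \in C -> v \in D -> is_cl S (C :&: D).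
Proof.
move=> /and3P[_ rC cC] /and3P[_ rD cD] vC vD; apply/and3P; split.
- by apply/set0Pn; exists v; rewrite inE vC.
- by rewrite inE (negbTE rC).
- apply/forall_inP => e eS; apply/implyP; rewrite !inE => /andP[eC eD].
  by rewrite (implyP (forall_inP cC e eS) eC) (implyP (forall_inP cD e eS) eD).
Qed.

(* Distinct minimal clusters are disjoint: this is what makes pops commute. *)
Lemma minimal_clusters_disjoint S C D :
  min_cl S C -> min_cl S D -> C != D -> forall v, v \in C -> v \notin D.
Proof.
move=> minC minD CnD v vC; apply/negP => vD.
have clCD := is_clusterI (minimal_is_cluster minC) (minimal_is_cluster minD) vC vD.
have eC := minimal_clusterP minC clCD (subsetIl C D).
have eD := minimal_clusterP minD clCD (subsetIr C D).
by move: CnD; rewrite -eC -{2}eD eqxx.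
Qed.

(* A cluster of least cardinality is minimal. *)
Lemma exists_minimal_cluster S : has_cl S -> exists C, min_cl S C.
Proof.
case/existsP=> C0 clC0.
case: (arg_minnP (fun C : {set V} => #|C|) clC0) => C clC Cmin.
exists C; apply/andP; split => //; apply/forallP => D; apply/implyP => DC.
apply/negP => clD; have := Cmin D clD.
by rewrite leqNgt (proper_card DC).
Qed.

Definition canon_cluster S : {set V} := odflt finset.set0 [pick C | min_cl S C].

Lemma canon_clusterP S : has_cl S -> min_cl S (canon_cluster S).
Proof.
move=> /exists_minimal_cluster[C minC]; rewrite /canon_cluster.
by case: pickP => //= /(_ C); rewrite minC.
Qed.

(* Root-connected means cluster-free: a cluster traps every path from it,
   and the set of vertices reachable from a vertex not reaching r is a cluster. *)
Lemma root_connectedE S : root_connected tail head r S = ~~ has_cl S.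
Proof.
apply/idP/idP.
- move/forallP=> conn; apply/negP => /existsP[C /and3P[Cn rC cC]].
  case/set0Pn: Cn => v vC; move: (conn v) => /connectP[p pp lp].
  elim: p v vC pp lp => [|w p IH] v vC /=; first by move=> _ lp; rewrite lp vC in rC.
  case/andP=> /existsP[e /and3P[eS /eqP te /eqP he]] pp lp.
  apply: (IH w) => //; rewrite -he.
  by apply: (implyP (forall_inP cC e eS)); rewrite te.
- move=> noC; apply/forallP => v; apply: contraR noC => vr.
  apply/existsP; exists [set u | connect (arc_rel tail head S) v u].
  apply/and3P; split.
  + by apply/set0Pn; exists v; rewrite inE connect0.
  + by rewrite inE.
  + apply/forall_inP => e eS; apply/implyP; rewrite !inE => ve.
    apply: connect_trans ve _; apply: connect1; apply/existsP; exists e.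
    by rewrite eS !eqxx.
Qed.

Lemma has_cluster_subset S T : S \subset T -> has_cl T -> has_cl S.
Proof.
move=> ST /existsP[C /and3P[Cn rC cC]]; apply/existsP; exists C.
apply/and3P; split => //; apply/forall_inP => e eS.
by apply: (forall_inP cC); apply: (fintype.subsetP ST).
Qed.


Variable R : realType.
Implicit Types (phi psi f g : {set E} -> R).

Lemma half_pow_ge0 k : 0 <= (2^-1 : R) ^+ k.
Proof. by rewrite exprn_ge0 // invr_ge0 ler0n. Qed.

Lemma half_le1 : (2^-1 : R) <= 1.
Proof. by rewrite invf_le1 // ?ler1n // ltr0n. Qed.

Definition agree_off C S S' : bool :=
  [forall e, (tail e \notin C) ==> ((e \in S') == (e \in S))].

Lemma agree_offP C S S' :
  reflect (forall e, tail e \notin C -> (e \in S') = (e \in S)) (agree_off C S S').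
Proof.
apply: (iffP forallP) => agr e; last by apply/implyP => eC; rewrite agr.
by move=> eC; move: (agr e); rewrite eC /= => /eqP.
Qed.

(* The resampled states are S \ out(C) together with any subset of out(C). *)
Lemma card_agree_off C S : #|[set S' | agree_off C S S']| = (2 ^ #|out_arcs tail C|)%N.
Proof.
set O := out_arcs tail C.
have -> : [set S' | agree_off C S S'] = [set (S :\: O) :|: Y | Y in powerset O].
  apply/setP => S'; rewrite inE; apply/idP/imsetP.
  - move/agree_offP => agr; exists (S' :&: O); first by rewrite powersetE subsetIr.
    apply/setP => e; rewrite !inE; case: (boolP (tail e \in C)) => eC /=.
      by rewrite andbT.
    by rewrite agr // andbF orbF.
  - case=> Y; rewrite powersetE => YO ->; apply/agree_offP => e eC.
    have eY : e \notin Y.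
      by apply/negP => eY; move: (fintype.subsetP YO e eY); rewrite inE (negbTE eC).
    by rewrite !inE eC (negbTE eY) orbF.
rewrite card_in_imset ?card_powerset // => Y1 Y2; rewrite ?inE ?powersetE => Y1O Y2O eqY.
apply/setP => e; case: (boolP (e \in O)) => eO.
  by move/setP: eqY => /(_ e); rewrite !inE; move: eO; rewrite inE => -> /=.
by apply/idP/idP => eY; move: eO; rewrite ?(fintype.subsetP Y1O e eY) ?(fintype.subsetP Y2O e eY).
Qed.

Definition resample C phi S : R :=
  (2^-1) ^+ #|out_arcs tail C| * \sum_(S' | agree_off C S S') phi S'.

Lemma resample_cst C S (a : R) : resample C (fun _ => a) S = a.
Proof.
rewrite /resample (eq_bigl (fun S' => S' \in [set S' | agree_off C S S'])); last first.
  by move=> S'; rewrite inE.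
rewrite sumr_const card_agree_off -[a *+ _]mulr_natl natrX mulrA -exprMn.
by rewrite mulVf ?pnatr_eq0 // expr1n mul1r.
Qed.

Lemma eq_resample C S phi psi :
  (forall S', agree_off C S S' -> phi S' = psi S') -> resample C phi S = resample C psi S.
Proof. by move=> eqf; rewrite /resample; congr (_ * _); apply: eq_bigr. Qed.

Lemma resample_ge0 C S phi : (forall S', 0 <= phi S') -> 0 <= resample C phi S.
Proof. by move=> phi0; rewrite /resample mulr_ge0 ?half_pow_ge0 // sumr_ge0. Qed.

Lemma resample_le C S phi psi :
  (forall S', phi S' <= psi S') -> resample C phi S <= resample C psi S.
Proof. by move=> le_phi; rewrite /resample ler_wpM2l ?half_pow_ge0 // ler_sum. Qed.

Lemma resampleD C S phi psi :
  resample C (fun X => phi X + psi X) S = resample C phi S + resample C psi S.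
Proof. by rewrite /resample big_split mulrDr. Qed.

Lemma resampleZ C S (b : R) phi :
  resample C (fun X => b * phi X) S = b * resample C phi S.
Proof. by rewrite /resample -mulr_sumr mulrCA. Qed.

Lemma resample_1B C S phi :
  resample C (fun X => 1 - phi X) S = 1 - resample C phi S.
Proof.
rewrite (eq_resample (psi := fun X => 1 + (-1) * phi X)); last first.
  by move=> X _; rewrite mulN1r.
by rewrite resampleD resample_cst resampleZ mulN1r.
Qed.

Lemma resample_ge_outcome C S phi X : (forall S', 0 <= phi S') -> agree_off C S X ->
  (2^-1) ^+ #|out_arcs tail C| * phi X <= resample C phi S.
Proof.
move=> phi0 SX; rewrite /resample ler_wpM2l ?half_pow_ge0 //.
by rewrite (bigD1 X) //= lerDl sumr_ge0.
Qed.

Lemma sum_agree_off_comp C D S phi : (forall v, v \in C -> v \notin D) ->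
  \sum_(X | agree_off D S X) \sum_(Y | agree_off C X Y) phi Y =
  \sum_(Y | agree_off (C :|: D) S Y) phi Y.
Proof.
move=> CD; rewrite (exchange_big_dep (agree_off (C :|: D) S)) /=; last first.
  move=> X Y /agree_offP SX /agree_offP XY; apply/agree_offP => e.
  by rewrite inE negb_or => /andP[eC eD]; rewrite XY // SX.
apply: eq_bigr => Y /agree_offP SY.
pose W := [set e | if tail e \in D then e \in Y else e \in S].
rewrite (big_pred1 W) // => X /=; apply/andP/eqP.
- case=> /agree_offP SX /agree_offP XY; apply/setP => e; rewrite inE.
  case: ifP => eD; last by rewrite SX // eD.
  have eC : tail e \notin C by apply/negP => /CD; rewrite eD.
  by rewrite XY.
- move=> ->; split; apply/agree_offP => e eD; rewrite inE; first by rewrite (negbTE eD).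
  case: ifP => // eD'; apply: SY; by rewrite inE negb_or eD eD'.
Qed.

Lemma resampleC C D S phi : (forall v, v \in C -> v \notin D) ->
  resample D (resample C phi) S = resample C (resample D phi) S.
Proof.
move=> CD; rewrite /resample -!mulr_sumr !mulrA [X in X * _]mulrC.
rewrite !sum_agree_off_comp //; last by move=> v vD; apply/negP => /CD; rewrite vD.
by rewrite finset.setUC.
Qed.

Fixpoint pop_expect f m S : R :=
  if m is m'.+1 then
    (if has_cl S then resample (canon_cluster S) (pop_expect f m') S else f S)
  else f S.

Lemma pop_expect_stopped f m S : ~~ has_cl S -> pop_expect f m S = f S.
Proof. by case: m => //= m /negbTE ->. Qed.

Lemma pop_expect_ge0 f m S : (forall X, 0 <= f X) -> 0 <= pop_expect f m S.
Proof.
by move=> f0; elim: m S => [|m IH] S //=; case: ifP => // _; exact: resample_ge0.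
Qed.

Lemma pop_expect_le f g m S :
  (forall X, f X <= g X) -> pop_expect f m S <= pop_expect g m S.
Proof.
by move=> le_fg; elim: m S => [|m IH] S //=; case: ifP => // _; exact: resample_le.
Qed.

Lemma pop_expect_affine f a b m S :
  pop_expect (fun X => a + b * f X) m S = a + b * pop_expect f m S.
Proof.
elim: m S => [|m IH] S //=; case: ifP => // _.
rewrite (eq_resample (psi := fun X => a + b * pop_expect f m X)) //.
by rewrite resampleD resample_cst resampleZ.
Qed.

Lemma pop_expectD f m k S :
  pop_expect f (m + k) S = pop_expect (pop_expect f m) k S.
Proof.
elim: k S => [|k IH] S /=; first by rewrite addn0.
rewrite addnS /=; case: (boolP (has_cl S)) => clS; last by rewrite pop_expect_stopped.
by apply: eq_resample => X _; rewrite IH.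
Qed.

Lemma minimal_cluster_agree_off C D S X : agree_off C S X ->
  (forall v, v \in D -> v \notin C) -> min_cl S D -> min_cl X D.
Proof.
move=> /agree_offP SX DC; rewrite (@minimal_cluster_local D S X) // => e eD.
by rewrite SX // DC.
Qed.

(* By induction,
   pops of the disjoint clusters C and canon_cluster S commute. *)
Lemma pop_expect_step f : (forall X, has_cl X -> f X = 0) ->
  forall m S C, min_cl S C -> pop_expect f m.+1 S = resample C (pop_expect f m) S.
Proof.
move=> f0 m; elim: m => [|m IH] S C minC; rewrite /= (minimal_has_cluster minC);
  have minK := canon_clusterP (minimal_has_cluster minC);
  (case: (eqVneq (canon_cluster S) C) => [-> //|KnC]);
  have KC := minimal_clusters_disjoint minK minC KnC;
  have CK : forall v, v \in C -> v \notin canon_cluster S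
    by move=> v vC; apply/negP => /KC; rewrite vC.
- rewrite (eq_resample (psi := fun _ => 0)); last first.
    by move=> X SX; apply/f0/(minimal_has_cluster (minimal_cluster_agree_off SX CK minC)).
  rewrite resample_cst (eq_resample (psi := fun _ => 0)) ?resample_cst //.
  by move=> X SX; apply/f0/(minimal_has_cluster (minimal_cluster_agree_off SX KC minK)).
- rewrite (eq_resample (psi := resample C (pop_expect f m))); last first.
    by move=> X SX; apply/IH/(minimal_cluster_agree_off SX CK minC).
  rewrite [RHS](eq_resample (psi := resample (canon_cluster S) (pop_expect f m))).
    by rewrite resampleC.
  by move=> X SX; apply/IH/(minimal_cluster_agree_off SX KC minK).
Qed.

Definition flip (e : E) S : {set E} := if e \in S then S :\ e else e |: S.

Lemma in_flip e S x : (x \in flip e S) = (if x == e then e \notin S else x \in S).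
Proof.
rewrite /flip; case: (eqVneq x e) => [->|xe]; case: ifP => eS;
  by rewrite ?inE ?eqxx ?eS ?(negbTE xe).
Qed.

Lemma flipK e : involutive (flip e).
Proof.
move=> S; apply/setP => x; rewrite !in_flip; case: (eqVneq x e) => [->|//].
by rewrite eqxx negbK.
Qed.

Lemma flip_inj e : injective (flip e).
Proof. exact: (can_inj (flipK e)). Qed.

Lemma flip_eq e S T : (flip e S == T) = (S == flip e T).
Proof. by apply/eqP/eqP => [<-|->]; rewrite flipK. Qed.

Lemma sum_flip e (P : pred {set E}) phi :
  \sum_(X | P (flip e X)) phi X = \sum_(Y | P Y) phi (flip e Y).
Proof.
rewrite [RHS](reindex_inj (@flip_inj e)) /=.
by apply: eq_bigr => X _; rewrite flipK.
Qed.

Lemma sum_flip_half e phi :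
  \sum_X phi X = 2^-1 * \sum_X (phi X + phi (flip e X)).
Proof. by rewrite big_split /= -(sum_flip e predT); lra. Qed.

(* When the tail of e lies in C, e is resampled anyway. *)
Lemma resample_flip_in e C S phi : tail e \in C ->
  resample C phi S = 2^-1 * resample C (fun X => phi X + phi (flip e X)) S.
Proof.
move=> eC; rewrite resampleD.
have -> : resample C (fun X => phi (flip e X)) S = resample C phi S.
  rewrite /resample -sum_flip; congr (_ * _); apply: eq_bigl => X.
  apply: eq_forallb => x; rewrite in_flip; case: (eqVneq x e) => [->|//].
  by rewrite eC.
lra.
Qed.

Lemma resample_flip_out e C S phi : tail e \notin C ->
  resample C phi (flip e S) = resample C (fun X => phi (flip e X)) S.
Proof.
move=> eC; rewrite /resample -sum_flip; congr (_ * _); apply: eq_bigl => X.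
apply: eq_forallb => x; rewrite !in_flip; case: (eqVneq x e) => [->|//].
by rewrite (negbTE eC) /=; case: (e \in S); case: (e \in X).
Qed.

Lemma minimal_cluster_flip e C S : tail e \notin C -> min_cl (flip e S) C = min_cl S C.
Proof.
move=> eC; apply: minimal_cluster_local => x xC; rewrite in_flip.
by case: (eqVneq x e) => [xe|//]; move: eC; rewrite -xe xC.
Qed.

Definition delta T : {set E} -> R := fun X => (X == T)%:R.

Lemma delta_clustered T X : ~~ has_cl T -> has_cl X -> delta T X = 0.
Proof.
by move=> rcT clX; rewrite /delta; case: (eqVneq X T) => [XT|//]; move: rcT; rewrite -XT clX.
Qed.

Section FlipExchange.
Variables (e : E) (T : {set E}).
Hypotheses (rcT : ~~ has_cl T) (rcT' : ~~ has_cl (flip e T)).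
Local Notation T' := (flip e T).

Definition flip_symmetric n : Prop := forall S,
  pop_expect (delta T) n S + pop_expect (delta T) n (flip e S) =
  pop_expect (delta T') n S + pop_expect (delta T') n (flip e S).

(* At stage 0 both sides are the indicator of {T, T'} on {S, flip e S}. *)
Lemma flip_symmetric0 : flip_symmetric 0.
Proof. by move=> S; rewrite /= /delta flip_eq (inj_eq (@flip_inj e)) addrC. Qed.

(* If S has a minimal cluster avoiding tail e, pop it on both sides. *)
Lemma flip_symmetric_out n S C : flip_symmetric n ->
  min_cl S C -> tail e \notin C ->
  pop_expect (delta T) n.+1 S + pop_expect (delta T) n.+1 (flip e S) =
  pop_expect (delta T') n.+1 S + pop_expect (delta T') n.+1 (flip e S).
Proof.
move=> IH minC eC; have minC' : min_cl (flip e S) C by rewrite minimal_cluster_flip.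
have d0 := delta_clustered rcT; have d0' := delta_clustered rcT'.
rewrite !(pop_expect_step d0 _ minC) !(pop_expect_step d0 _ minC').
rewrite !(pop_expect_step d0' _ minC) !(pop_expect_step d0' _ minC').
by rewrite !resample_flip_out // -!resampleD; apply: eq_resample => X _; exact: IH.
Qed.

Lemma flip_symmetric_in n X : flip_symmetric n ->
  has_cl X -> tail e \in canon_cluster X ->
  pop_expect (delta T) n.+1 X = pop_expect (delta T') n.+1 X.
Proof.
move=> IH clX eK /=; rewrite clX (resample_flip_in _ _ eK) [RHS](resample_flip_in _ _ eK).
by congr (_ * _); apply: eq_resample => Y _; exact: IH.
Qed.

Lemma delta_flip_clustered X : has_cl (flip e X) -> delta T X = delta T' X.
Proof.
move=> clX'; rewrite /delta; case: (eqVneq X T) => [XT|_]; first by move: rcT'; rewrite -XT clX'.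
by case: (eqVneq X T') => [XT'|//]; move: rcT; rewrite -(flipK e T) -XT' clX'.
Qed.

Lemma flip_symmetric_term n X : flip_symmetric n ->
  (has_cl X -> tail e \in canon_cluster X) -> has_cl X || has_cl (flip e X) ->
  pop_expect (delta T) n.+1 X = pop_expect (delta T') n.+1 X.
Proof.
move=> IH inK; case: (boolP (has_cl X)) => [clX _|rcX clX'].
  exact: flip_symmetric_in (inK clX).
by rewrite !pop_expect_stopped //; exact: delta_flip_clustered.
Qed.

Lemma flip_exchange n : flip_symmetric n.
Proof.
elim: n => [|n IH]; first exact: flip_symmetric0.
move=> S; case: (boolP [exists C, min_cl S C && (tail e \notin C)]).
  by case/existsP=> C /andP[minC eC]; apply: flip_symmetric_out minC eC.
move=> /existsPn noC.
have inS : has_cl S -> tail e \in canon_cluster S.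
  by move=> clS; have := noC (canon_cluster S); rewrite canon_clusterP //= negbK.
have inS' : has_cl (flip e S) -> tail e \in canon_cluster (flip e S).
  move=> clS'; apply: contraR (noC (canon_cluster (flip e S))) => eK.
  by rewrite -(minimal_cluster_flip S eK) canon_clusterP.
case: (boolP (has_cl S || has_cl (flip e S))) => cl.
  rewrite (flip_symmetric_term IH inS cl) (flip_symmetric_term IH inS') //.
  by rewrite flipK orbC.
move: cl; rewrite negb_or => /andP[rcS rcS'].
by rewrite !pop_expect_stopped //; exact: flip_symmetric0.
Qed.

End FlipExchange.

Definition total_mass n T : R := \sum_X pop_expect (delta T) n X.

(* Summing flip_exchange over all S, grouped into pairs {S, flip e S}. *)
Lemma total_mass_flip e T n : ~~ has_cl T -> ~~ has_cl (flip e T) ->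
  total_mass n T = total_mass n (flip e T).
Proof.
move=> rcT rcT'; rewrite /total_mass (sum_flip_half e) [RHS](sum_flip_half e).
by congr (_ * _); apply: eq_bigr => X _; exact: flip_exchange.
Qed.

(* Adding arcs one at a time keeps root-connectedness, so the total mass of a
   root-connected T equals that of any superset U. *)
Lemma total_mass_superset T U n : ~~ has_cl T -> T \subset U ->
  total_mass n T = total_mass n U.
Proof.
move: {2}#|U :\: T| (erefl #|U :\: T|) => k; elim: k T => [|k IH] T cardUT rcT TU.
  suff -> : U = T by [].
  by apply/eqP; rewrite finset.eqEsubset TU -finset.setD_eq0 -cards_eq0 cardUT.
have [e eUT] : exists e, e \in U :\: T by apply/card_gt0P; rewrite cardUT.
move: (eUT); rewrite inE => /andP[eT eU].
have flipT : flip e T = e |: T by rewrite /flip (negbTE eT).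
have rcT' : ~~ has_cl (e |: T).
  by apply: contra rcT; apply: has_cluster_subset; apply: finset.subsetUr.
rewrite (@total_mass_flip e) ?flipT //; apply: IH => //; last first.
  by rewrite finset.subUset finset.sub1set eU TU.
have -> : U :\: (e |: T) = (U :\: T) :\ e by apply/setP => x; rewrite !inE negb_or andbA.
by move: cardUT; rewrite (cardsD1 e) eUT add1n => -[].
Qed.

Lemma total_mass_uniform T U n : ~~ has_cl T -> ~~ has_cl U ->
  total_mass n T = total_mass n U.
Proof.
move=> rcT rcU; rewrite (@total_mass_superset T (T :|: U)) ?finset.subsetUl //.
by rewrite [RHS](@total_mass_superset U (T :|: U)) ?finset.subsetUr.
Qed.

(* A cluster of S must be left by some arc missing from S, since the complete
   arc set is root-connected. *)
Lemma cluster_missing_arc S C : ~~ has_cl [set: E] -> is_cl S C ->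
  exists2 e, tail e \in C & e \notin S.
Proof.
move=> rcE /and3P[Cn rC cC]; apply: contraNP rcE => noe; apply/existsP; exists C.
apply/and3P; split => //; apply/forall_inP => e _; apply/implyP => eC.
have eS : e \in S by apply: contraT => eS; case: noe; exists e.
exact: (implyP (forall_inP cC e eS) eC).
Qed.

Section Termination.
Hypothesis rcE : ~~ has_cl [set: E].

(* Indicator of having stopped: pop_expect stopped k S is the probability of
   having stopped within k steps. *)
Definition stopped : {set E} -> R := fun X => (~~ has_cl X)%:R.

Lemma stopped_clustered X : has_cl X -> stopped X = 0.
Proof. by rewrite /stopped => ->. Qed.

Lemma pop_expect_stopped_ge0 k S : 0 <= pop_expect stopped k S.
Proof. by apply: pop_expect_ge0 => X; exact: ler0n. Qed.

Lemma pop_expect_stopped_le1 k S : pop_expect stopped k S <= 1.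
Proof.
have := @pop_expect_le stopped (fun X => 1 + 0 * stopped X) k S.
rewrite pop_expect_affine !mul0r addr0; apply=> X.
by rewrite mul0r addr0 /stopped; case: has_cl.
Qed.

(* Lower bound on the probability of any prescribed outcome of one step. *)
Definition step_prob : R := (2^-1) ^+ #|E|.

Lemma step_prob_ge0 : 0 <= step_prob. Proof. exact: half_pow_ge0. Qed.

Lemma step_prob_le1 : step_prob <= 1.
Proof. by rewrite exprn_ile1 // ?invr_ge0 ?ler0n // half_le1. Qed.

(* Each pop can add a missing arc, so within k >= |E \ S| steps the process
   stops with probability at least step_prob ^ k. *)
Lemma stop_within k S : (#|E| - #|S| <= k)%N -> step_prob ^+ k <= pop_expect stopped k S.
Proof.
elim: k S => [|k IH] S missing.
  have -> : S = [set: E].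
    by apply/eqP; rewrite eqEcard finset.subsetT cardsT -subn_eq0 -leqn0.
  by rewrite /= /stopped rcE expr0.
rewrite /=; case: (boolP (has_cl S)) => clS; last first.
  by rewrite /stopped clS exprn_ile1 // ?step_prob_ge0 ?step_prob_le1.
set C := canon_cluster S; have minC : min_cl S C := canon_clusterP clS.
have [e eC eS] := cluster_missing_arc rcE (minimal_is_cluster minC).
have SC : agree_off C S (S :|: out_arcs tail C).
  by apply/agree_offP => x xC; rewrite !inE (negbTE xC) orbF.
apply: le_trans (resample_ge_outcome (@pop_expect_stopped_ge0 k) SC).
rewrite exprS; apply: ler_pM; rewrite ?step_prob_ge0 ?exprn_ge0 ?step_prob_ge0 //.
  by apply: ler_wiXn2l; rewrite ?invr_ge0 ?ler0n ?half_le1 ?max_card.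
apply: IH; rewrite leq_subLR; rewrite leq_subLR in missing.
apply: leq_trans missing _; rewrite addnS -addSn leq_add2r; apply: proper_card.
rewrite finset.properEneq finset.subsetUl andbT; apply/eqP => /setP /(_ e).
by rewrite !inE eC (negbTE eS).
Qed.

(* Popping in windows of |E|+1 steps, each ending stopped w.p. >= window_prob. *)
Definition window := #|E|.+1.
Definition window_prob : R := step_prob ^+ window.

Lemma window_gt0 : (0 < window)%N. Proof. by []. Qed.

Lemma window_prob_gt0 : 0 < window_prob.
Proof. by rewrite /window_prob /step_prob !exprn_gt0 // invr_gt0 ltr0n. Qed.

Lemma window_prob_le1 : window_prob <= 1.
Proof. exact/exprn_ile1/step_prob_le1/step_prob_ge0. Qed.

(* Every state has |E \ S| <= |E| < window missing arcs. *)
Lemma stop_in_window S : window_prob <= pop_expect stopped window S.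
Proof. by apply: stop_within; rewrite /window; apply: leqW; apply: leq_subr. Qed.

Lemma running_windows j a S :
  1 - pop_expect stopped (a + j * window) S <= (1 - window_prob) ^+ j.
Proof.
elim: j S => [|j IH] S.
  by rewrite expr0 mul0n addn0; have := pop_expect_stopped_ge0 a S; lra.
rewrite mulSn [(window + _)%N]addnC addnA pop_expectD.
have q0 : 0 <= (1 - window_prob) ^+ j by apply: exprn_ge0; have := window_prob_le1; lra.
have lb : forall X, (1 - (1 - window_prob) ^+ j) + (1 - window_prob) ^+ j * stopped X <=
                    pop_expect stopped (a + j * window) X.
  move=> X; case: (boolP (has_cl X)) => clX.
    by rewrite stopped_clustered // mulr0 addr0; have := IH X; lra.
  by rewrite pop_expect_stopped // /stopped clX mulr1 subrK.
have := pop_expect_le window S lb; rewrite pop_expect_affine.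
have : (1 - window_prob) ^+ j * window_prob <=
       (1 - window_prob) ^+ j * pop_expect stopped window S.
  by apply: ler_wpM2l => //; exact: stop_in_window.
rewrite exprSr mulrBr mulr1; lra.
Qed.

Lemma running_bound n S :
  1 - pop_expect stopped n S <= (1 - window_prob) ^+ (n %/ window).
Proof. by rewrite {1}(divn_eq n window) addnC running_windows. Qed.

End Termination.

Section Histories.
Variable rule : seq {set E} -> {set V}.
Hypothesis rule_valid : valid_rule tail head r rule.
Local Notation tr := (trans tail head r R rule).
Local Notation sp := (state_prob tail head r R rule).
Local Notation hw := (hist_weight tail head r R rule).

Definition history_expect f m (h : seq {set E}) : R :=
  \sum_(t : m.-tuple {set E}) f (last (last finset.set0 h) t) *
     \prod_(i < m) tr (h ++ take i t) (nth finset.set0 t i).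

Lemma history_expectS f m h :
  history_expect f m.+1 h = \sum_X tr h X * history_expect f m (rcons h X).
Proof.
rewrite /history_expect sum_tupleS; apply: eq_bigr => X _; rewrite mulr_sumr.
apply: eq_bigr => t _; rewrite big_ord_recl /= cats0 last_rcons.
by rewrite mulrCA; congr (_ * (_ * _)); apply: eq_bigr => i _; rewrite cat_rcons.
Qed.

Lemma sum_trans h F : \sum_X tr h X * F X =
  if has_cl (last finset.set0 h) then resample (rule h) F (last finset.set0 h)
  else F (last finset.set0 h).
Proof.
rewrite /trans /=; case: ifP => clh.
  rewrite /resample mulr_sumr [RHS]big_mkcond; apply: eq_bigr => X _.
  by rewrite /agree_off; case: ifP; rewrite ?mul0r.
rewrite (bigD1 (last finset.set0 h)) //= eqxx mul1r big1 ?addr0 //.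
by move=> X /negbTE ->; rewrite mul0r.
Qed.

(* Transition probabilities sum to 1. *)
Lemma history_expect1 m h : history_expect (fun _ => 1) m h = 1.
Proof.
elim: m h => [|m IH] h; first by rewrite /history_expect sum_tuple0 big_ord0 mulr1.
rewrite history_expectS (eq_bigr (fun X => tr h X * 1)); last by move=> X _; rewrite IH.
by rewrite sum_trans; case: ifP => // _; rewrite resample_cst.
Qed.

Lemma history_expect_pop f : (forall X, has_cl X -> f X = 0) ->
  forall m h, h != [::] -> history_expect f m h = pop_expect f m (last finset.set0 h).
Proof.
move=> f0 m; elim: m => [|m IH] h hne.
  by rewrite /history_expect sum_tuple0 big_ord0 mulr1.
rewrite history_expectS (eq_bigr (fun X => tr h X * pop_expect f m X)); last first.
  by move=> X _; rewrite IH ?last_rcons // -size_eq0 size_rcons.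
rewrite sum_trans; case: ifP => clh; first by rewrite (pop_expect_step f0 _ (rule_valid hne clh)).
by rewrite pop_expect_stopped ?clh //= clh.
Qed.

(* The initial state is a resampling of everything. *)
Lemma resample_all F : resample [set: V] F finset.set0 = step_prob * \sum_X F X.
Proof.
rewrite /resample /step_prob; congr (_ ^+ _ * _).
  have -> : out_arcs tail [set: V] = [set: E] by apply/setP => e; rewrite !inE.
  by rewrite cardsT.
by apply: eq_bigl => X; apply/forallP => e; rewrite inE.
Qed.

Lemma sum_hist_weight f n :
  \sum_(t : n.+1.-tuple {set E}) hw t * f (last finset.set0 t) =
  resample [set: V] (fun S0 => history_expect f n [:: S0]) finset.set0.
Proof.
rewrite resample_all sum_tupleS mulr_sumr; apply: eq_bigr => S0 _.
rewrite /history_expect mulr_sumr; apply: eq_bigr => t _; rewrite /hist_weight /=.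
by rewrite -mulrA [_ * f _]mulrC.
Qed.

Lemma sum_state_prob (P : pred {set E}) n :
  \sum_(S | P S) sp n S =
  \sum_(t : n.+1.-tuple {set E}) hw t * (P (last finset.set0 t))%:R.
Proof.
rewrite /state_prob (exchange_big_dep xpredT) //=; apply: eq_bigr => t _.
case: (boolP (P (last finset.set0 t))) => Pt.
  rewrite mulr1 (big_pred1 (last finset.set0 t)) // => S /=.
  by apply/andP/eqP => [[_ /eqP <-]|->].
rewrite mulr0 big_pred0 // => S.
by case: (eqVneq (last finset.set0 t) S) => [<-|]; rewrite ?(negbTE Pt) ?andbF.
Qed.

Lemma state_prob_total n : \sum_S sp n S = 1.
Proof.
rewrite (sum_state_prob xpredT n) [LHS](sum_hist_weight (fun _ => 1)).
rewrite (eq_resample (psi := fun _ => 1)) ?resample_cst //.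
by move=> S0 _; rewrite history_expect1.
Qed.

Lemma stopped_mass n :
  \sum_(S | ~~ has_cl S) sp n S = resample [set: V] (pop_expect stopped n) finset.set0.
Proof.
rewrite sum_state_prob (sum_hist_weight stopped n); apply: eq_resample => S0 _.
by rewrite history_expect_pop //; exact: stopped_clustered.
Qed.

Lemma clustered_mass n :
  \sum_(S | has_cl S) sp n S =
  resample [set: V] (fun X => 1 - pop_expect stopped n X) finset.set0.
Proof.
rewrite resample_1B -stopped_mass -(state_prob_total n).
by rewrite [\sum_S _](bigID (fun S => has_cl S)) /= addrK.
Qed.

Lemma state_prob_mass n T : ~~ has_cl T -> sp n T = step_prob * total_mass n T.
Proof.
move=> rcT; rewrite /state_prob big_mkcond /=.
rewrite (eq_bigr (fun t => hw t * delta T (last finset.set0 t))); last first.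
  by move=> t _; rewrite /delta; case: eqP; rewrite ?mulr1 ?mulr0.
rewrite sum_hist_weight -resample_all; apply: eq_resample => S0 _.
by rewrite history_expect_pop // => X; exact: delta_clustered.
Qed.
End Histories.

Local Open Scope classical_set_scope.

Lemma cvg_geometric (u : nat -> R) (l q : R) (K : nat) : 0 <= q < 1 -> (0 < K)%N ->
  (forall n, `|l - u n| <= q ^+ (n %/ K)) -> u @ \oo --> l.
Proof.
move=> /andP[q0 q1] K0 close; apply/cvgrPdist_lt => eps eps0.
have q1' : `|q| < 1 by rewrite ger0_norm.
have /cvgrPdist_lt /(_ eps eps0) [N _ qN] := cvg_expr q1'.
exists (N * K)%N => // n /= Nn; apply: le_lt_trans (close n) _.
apply: le_lt_trans (qN N (leqnn N)); rewrite sub0r normrN ger0_norm ?exprn_ge0 //.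
by apply: ler_wiXn2l => //; [exact: ltW | rewrite leq_divRL].
Qed.

Section Convergence.
Variable rule : seq {set E} -> {set V}.
Hypotheses (rule_valid : valid_rule tail head r rule) (rcE : ~~ has_cl [set: E]).
Local Notation sp := (state_prob tail head r R rule).
Local Notation clustered_prob n := (\sum_(S | has_cl S) sp n S).

Lemma clustered_mass_bound n :
  0 <= clustered_prob n <= (1 - window_prob) ^+ (n %/ window).
Proof.
rewrite (clustered_mass rule_valid); apply/andP; split.
  by apply: resample_ge0 => X; have := pop_expect_stopped_le1 n X; lra.
rewrite -[X in _ <= X](resample_cst [set: V] finset.set0); apply: resample_le => X.
exact: running_bound.
Qed.

Lemma window_prob_range : 0 <= 1 - window_prob < 1.
Proof. by have := window_prob_gt0; have := window_prob_le1; rewrite /=; lra. Qed.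

Lemma state_prob_uniform n T : ~~ has_cl T ->
  sp n T = (1 - clustered_prob n) / #|[pred S : {set E} | ~~ has_cl S]|%:R.
Proof.
move=> rcT; rewrite (clustered_mass rule_valid) resample_1B -(stopped_mass rule_valid).
have -> : \sum_(S | ~~ has_cl S) sp n S = \sum_(S | ~~ has_cl S) sp n T.
  apply: eq_bigr => S rcS; rewrite !(state_prob_mass rule_valid) //.
  by congr (_ * _); exact: total_mass_uniform.
rewrite sumr_const opprB addrC subrK -[sp n T *+ _]mulr_natr mulfK // pnatr_eq0 -lt0n.
by apply/card_gt0P; exists [set: E]%SET.
Qed.

Lemma clustered_mass_cvg : (fun n => clustered_prob n) @ \oo --> (0 : R).
Proof.
apply: (cvg_geometric window_prob_range window_gt0) => n.
by rewrite sub0r normrN ger0_norm; case/andP: (clustered_mass_bound n).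
Qed.

Lemma state_prob_cvg T : ~~ has_cl T ->
  (fun n => sp n T) @ \oo --> (#|[pred S : {set E} | ~~ has_cl S]|%:R : R)^-1.
Proof.
move=> rcT; apply: (cvg_geometric window_prob_range window_gt0) => n.
rewrite state_prob_uniform //; set N := #|_|%:R.
have [c0 c1] := andP (clustered_mass_bound n).
have N1 : 1 <= N by rewrite ler1n; apply/card_gt0P; exists [set: E]%SET.
have Ni : 0 < N^-1 <= 1 by rewrite invr_gt0 invf_le1 ?(lt_le_trans ltr01 N1) ?N1.
case/andP: Ni => Ni0 Ni1.
rewrite mulrBl mul1r opprB addrC subrK ger0_norm; last by rewrite mulr_ge0 // ltW.
by apply: le_trans c1; exact: ler_piMr.
Qed.
End Convergence.
End ClusterPopping.

Local Open Scope classical_set_scope.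
Local Open Scope ring_scope.

Theorem mainTheorem12 (V E : finType) (tail head : E -> V) (r : V)
  (R : realType) (rule : seq {set E} -> {set V}) :
  (forall v : V, connect (arc_rel tail head [set: E]) v r) ->
  valid_rule tail head r rule ->
  ((fun n : nat =>
      \sum_(S : {set E} | has_cluster tail head r S)
         state_prob tail head r R rule n S) @ \oo --> (0 : R)) /\
  (forall S : {set E}, root_connected tail head r S ->
     (fun n : nat => state_prob tail head r R rule n S) @ \oo -->
       (#|(finset.finset (fun S' : {set E} => root_connected tail head r S'))|%:R : R)^-1).
Proof.
move=> conn valid.
have rcE : ~~ has_cluster tail head r [set: E]%SET.
  by rewrite -root_connectedE; apply/forallP.
split; first exact: clustered_mass_cvg valid rcE.
move=> S; rewrite root_connectedE => rcS.
rewrite (eq_card (B := [pred X : {set E} | ~~ has_cluster tail head r X])).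
  exact: (state_prob_cvg valid rcE rcS).
by move=> X; rewrite !inE root_connectedE.
Qed.
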